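(* Let $$A= \begin{pmatrix} 1& -2& 2\\ 2&-1& 2\\ 2&-2& 3 \end{pmatrix}.$$ For every positive integer $n$, writing $A^n(3,4,5)^\top=(x,y,z)^\top$, the circumradius of the triangle with side lengths $x,y,z$ is $R_n=n^2+3n+\frac52$.
   Context: Triples are regarded as row vectors and $\top$ denotes transpose. The triple $A^n(3,4,5)^\top$ is a primitive Pythagorean triple (positive integers with $x^2+y^2=z^2$), so the triangle is a right triangle with hypotenuse $z$. *)

From HB Require Import structures.
From mathcomp Require Import all_boot all_order all_algebra.
Set Implicit Arguments. Unset Strict Implicit. Unset Printing Implicit Defensive.
Import Order.TTheory GRing.Theory Num.Theory.
Local Open Scope ring_scope.

Definition matA : 'M[int]_3 :=
  \matrix_(i < 3, j < 3)
    (nth 0 (nth [::] [:: [:: 1; -2; 2]; [:: 2; -1; 2]; [:: 2; -2; 3]] i) j).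

Definition v345 : 'cV[int]_3 := \col_(i < 3) (nth 0 [:: 3; 4; 5] i).

(* Circumradius of a (nondegenerate) triangle with side lengths a, b, c:
   R = abc / (4K), K the area given by Heron's formula, i.e.
   R = abc / sqrt((a+b+c)(-a+b+c)(a-b+c)(a+b-c)). *)
Definition circumradius (R : rcfType) (a b c : R) : R :=
  a * b * c / Num.sqrt ((a + b + c) * (- a + b + c) * (a - b + c) * (a + b - c)).

(* A^n (3,4,5)^T = (2n+3, 2n^2+6n+4, 2n^2+6n+5)^T, a right triangle with
   hypotenuse z = 2n^2+6n+5; by Thales the circumradius of a right triangle
   is half its hypotenuse, which gives n^2+3n+5/2. *)

From HB Require Import structures.
From mathcomp Require Import all_boot all_order all_algebra.
From mathcomp Require Import ring lra.
Import Order.TTheory GRing.Theory Num.Theory.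
Local Open Scope ring_scope.

Definition pythagorean_col (n : nat) : 'cV[int]_3 :=
  \col_(i < 3) nth 0 [:: 2 * n%:Z + 3; 2 * n%:Z ^+ 2 + 6 * n%:Z + 4;
                         2 * n%:Z ^+ 2 + 6 * n%:Z + 5] i.

Lemma matA_expn_v345 (n : nat) : matA ^+ n *m v345 = pythagorean_col n.
Proof.
elim: n => [|n IHn].
  rewrite expr0 mul1mx; apply/matrixP => i j.
  by rewrite !mxE; case: i => [[|[|[|]]] ?].
rewrite exprS -mulmxE -mulmxA IHn; apply/matrixP => i j.
rewrite !mxE !big_ord_recr big_ord0 /= !mxE /=.
by case: i => [[|[|[|]]] ?] //=; ring.
Qed.

Lemma heron_productE (R : comPzRingType) (a b c : R) :
  (a + b + c) * (- a + b + c) * (a - b + c) * (a + b - c)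
  = (2 * a * b) ^+ 2 - (a ^+ 2 + b ^+ 2 - c ^+ 2) ^+ 2.
Proof. by ring. Qed.

Lemma circumradius_right (R : rcfType) (a b c : R) : 0 < a -> 0 < b ->
  a ^+ 2 + b ^+ 2 = c ^+ 2 -> circumradius a b c = c / 2.
Proof.
move=> a_gt0 b_gt0 pyth; rewrite /circumradius heron_productE pyth subrr.
rewrite expr0n subr0 sqrtr_sqr ger0_norm; last by nra.
by field; rewrite !gt_eqF.
Qed.

Theorem mainTheorem7 (R : rcfType) (n : nat) : (0 < n)%N ->
  let w := matA ^+ n *m v345 in
  circumradius ((w 0 0)%:~R : R) (w 1 0)%:~R (w 2 0)%:~R
  = (n%:R) ^+ 2 + 3 * n%:R + 5 / 2.
Proof.
move=> _ w; rewrite /w matA_expn_v345 !mxE /=.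
rewrite !(rmorphD, rmorphM, rmorphXn) /= -!pmulrn.
have n_ge0 : 0 <= (n%:R : R) by rewrite ler0n.
rewrite circumradius_right; [by field | nra | nra | ring].
Qed.
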